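(* For integers $m\ge1$, $n\ge1$, let $\Delta_{m,n}$ be the subgraph of the integer lattice graph $\mathbb{Z}^m$ induced by $\{x\in\mathbb{Z}^m: 0\le x_1\le\cdots\le x_m\le n\}$. Then the map $\phi:I_m^{(n)}\to\Delta_{m,n}$, $\phi(\mathbf{x})=(\phi_1(\mathbf{x}),\dots,\phi_m(\mathbf{x}))$ with $\phi_k(\mathbf{x})=\sum_{i=m-k+1}^m\mathbf{x}(i)$, is a graph isomorphism. Consequently $I_m^{(n)}\cong F_m(I_{n+m-1})$.
   Context: $I_m$ is the path graph on vertices $\{0,1,\dots,m\}$ with $i\sim i+1$. $\mathbb{Z}^m$ is the graph on integer points with $x\sim y$ iff $\sum_i|x_i-y_i|=1$. $I_m^{(n)}$ is the $n$th reduced power of $I_m$: vertices are degree-$n$ monomials $\mathbf{x}$ in the vertices of $I_m$, with $\mathbf{x}(i)$ the multiplicity of vertex $i$, two monomials adjacent iff they differ by moving one token along one edge. $F_m(H)$ is the $m$-token graph of $H$: vertices are $m$-element subsets of $V(H)$, adjacent iff their symmetric difference is $\{u,v\}$ for an edge $uv$ of $H$. *)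

From mathcomp Require Import all_boot all_order all_algebra.
Set Implicit Arguments. Unset Strict Implicit. Unset Printing Implicit Defensive.
Import Order.TTheory GRing.Theory Num.Theory.

Definition is_graph_iso (V W : Type) (PV : V -> Prop) (EV : V -> V -> Prop)
  (PW : W -> Prop) (EW : W -> W -> Prop) (f : V -> W) : Prop :=
  [/\ (forall x, PV x -> PW (f x)),
      (forall x y, PV x -> PV y -> f x = f y -> x = y),
      (forall z, PW z -> exists2 x, PV x & f x = z)
    & (forall x y, PV x -> PV y -> (EV x y <-> EW (f x) (f y)))].

Definition graphs_isomorphic (V W : Type) (PV : V -> Prop) (EV : V -> V -> Prop)
  (PW : W -> Prop) (EW : W -> W -> Prop) : Prop :=
  exists f : V -> W, is_graph_iso PV EV PW EW f.

(* Edges of the path graph I_m on {0,...,m} (here on 'I_m.+1, or any ordinal type). *)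
Definition path_edge (N : nat) (i j : 'I_N) : bool := (i.+1 == j) || (j.+1 == i).

(* Reduced power I_m^(n): degree-n monomials in the m+1 vertices of I_m,
   encoded by their multiplicity functions x : 'I_m.+1 -> nat. *)
Definition redpow_vertex (m n : nat) (x : {ffun 'I_m.+1 -> nat}) : Prop :=
  (\sum_(i < m.+1) x i)%N = n.

(* y is obtained from x by moving one token from i to j along an edge ij,
   i.e. y = x - e_i + e_j (in nat, which forces x i >= 1). *)
Definition redpow_adj (m : nat) (x y : {ffun 'I_m.+1 -> nat}) : Prop :=
  exists i j : 'I_m.+1, path_edge i j /\
    (forall k, y k + (k == i) = x k + (k == j))%N.

(* Delta_{m,n}: induced subgraph of Z^m on 0 <= y_1 <= ... <= y_m <= n
   (coordinates indexed 0..m-1). *)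
Definition delta_vertex (m n : nat) (y : {ffun 'I_m -> int}) : Prop :=
  forall i j : 'I_m, (i <= j)%N -> (0 <= y i /\ y i <= y j /\ y j <= Posz n)%R.

Definition lattice_adj (m : nat) (y z : {ffun 'I_m -> int}) : Prop :=
  (\sum_(i < m) `|y i - z i|)%R = 1%R.

(* phi_k(x) = sum_{i=m-k+1}^m x(i), k = 1..m; with 0-based k' = k-1 this is
   the sum over i >= m - k'. *)
Definition phi (m : nat) (x : {ffun 'I_m.+1 -> nat}) : {ffun 'I_m -> int} :=
  [ffun k : 'I_m => Posz (\sum_(i < m.+1 | (m - k <= i)%N) x i)%N].

(* Token graph F_m(I_N) with I_N on vertices 'I_N.+1 = {0..N}. *)
Definition token_vertex (m N : nat) (A : {set 'I_N.+1}) : Prop := #|A| = m.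

Definition token_adj (N : nat) (A B : {set 'I_N.+1}) : Prop :=
  exists u v : 'I_N.+1, path_edge u v /\ (A :\: B) :|: (B :\: A) = [set u; v].

From mathcomp Require Import all_boot all_order all_algebra.
From mathcomp Require Import zify.
Import Order.TTheory GRing.Theory Num.Theory.
Set Implicit Arguments. Unset Strict Implicit. Unset Printing Implicit Defensive.

(* A vertex x is coded
   by its tail sums  tail x t = sum_{i >= t} x(i),  a nonincreasing profile
   from n (at t = 0) down to 0 (at t = m+1); phi lists its inner values
   backwards, and conversely every nonincreasing profile comes from a vertex.
   Moving a token along the edge {s, s+1} changes exactly the tail sum at s+1
   by one, i.e. one coordinate of phi by one: a unit step of Z^m.

   Part 2: psi y = {y_k + k | k} is an isomorphism Delta_{m,n} -> F_m(I_{n+m-1}).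
   The positions k |-> y_k + k are strictly increasing, and an m-set has a
   unique strictly increasing enumeration; a unit step of y moves one token to
   a neighbouring free place, and conversely. *)

Lemma iso_comp (U V W : Type) PU EU PV EV PW EW (f : U -> V) (g : V -> W) :
  is_graph_iso PU EU PV EV f -> is_graph_iso PV EV PW EW g ->
  is_graph_iso PU EU PW EW (fun x => g (f x)).
Proof.
move=> [f_vert f_inj f_surj f_adj] [g_vert g_inj g_surj g_adj]; split.
- by move=> x /f_vert /g_vert.
- by move=> x y hx hy /g_inj eq_f; apply: f_inj => //; apply: eq_f; exact: f_vert.
- move=> z /g_surj [y /f_surj [x hx <-] <-]; by exists x.
- by move=> x y hx hy; rewrite f_adj // g_adj //; exact: f_vert.
Qed.

Definition unit_step (m : nat) (f g : 'I_m -> nat) : Prop :=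
  exists k0, forall l, g l = (f l + (l == k0))%N.

Lemma lattice_adj_unit_step m (f g : 'I_m -> nat) :
  lattice_adj [ffun k => Posz (f k)] [ffun k => Posz (g k)] <->
  unit_step f g \/ unit_step g f.
Proof.
rewrite /lattice_adj; split => [sum1 | [] [k0 step]].
all: try by rewrite (bigD1 k0) //= big1 => [|l l_k0]; rewrite !ffunE step ?eqxx;
       [lia | rewrite (negbTE l_k0) addn0 subrr].
case: (pickP (fun k => f k != g k)) => [k0 fg_k0 | f_eq_g]; last first.
  move: sum1; rewrite big1 // => l _.
  by rewrite !ffunE (eqP (negbFE (f_eq_g l))) subrr.
move: sum1; rewrite (bigD1 k0) //= !ffunE.
set rest := (\sum_(l < m | l != k0) _)%R => sum1.
have rest_ge0 : (0 <= rest)%R by apply: sumr_ge0.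
have rest0 : rest = 0%R by move/eqP: fg_k0; lia.
have eq_off l : l != k0 -> f l = g l.
  move=> l_k0; have := psumr_eq0P (fun i _ => normr_ge0 _) rest0 l_k0.
  by rewrite !ffunE => /eqP; rewrite normr_eq0 subr_eq0 => /eqP [].
have step_k0 : (g k0 = f k0 + 1 \/ f k0 = g k0 + 1)%N by lia.
by case: step_k0 => step_k0; [left | right]; exists k0 => l;
  have [->|l_k0] := eqVneq l k0; rewrite // eq_off ?addn0.
Qed.

Section TailSums.
Variable m : nat.
Implicit Types (x : {ffun 'I_m.+1 -> nat}) (t : nat).

Definition tail x t : nat := (\sum_(i < m.+1 | t <= i) x i)%N.

Lemma tail0 x : tail x 0 = (\sum_(i < m.+1) x i)%N.
Proof. exact: eq_bigl. Qed.

Lemma tail_out x t : (m < t)%N -> tail x t = 0%N.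
Proof.
move=> lt_mt; rewrite /tail big_pred0 // => i.
by apply/negbTE; rewrite -ltnNge (leq_trans (ltn_ord i)).
Qed.

Lemma tail_rec x (k : 'I_m.+1) : tail x k = (x k + tail x k.+1)%N.
Proof.
rewrite /tail (bigD1 k) //=; congr addn; apply: eq_bigl => i.
by rewrite ltn_neqAle eq_sym -val_eqE andbC.
Qed.

Lemma tail_anti x t t' : (t <= t')%N -> (tail x t' <= tail x t)%N.
Proof.
move=> le_tt'; rewrite /tail [X in (_ <= X)%N](bigID (fun i : 'I_m.+1 => t' <= i)%N) /=.
rewrite [X in (_ <= X + _)%N](eq_bigl (fun i : 'I_m.+1 => t' <= i)%N) ?leq_addr //.
by move=> i; case: (leqP t' i) => [/(leq_trans le_tt') ->|]; rewrite ?andbF.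
Qed.

Lemma tail_indicator (i : 'I_m.+1) t : (\sum_(k < m.+1 | t <= k) (k == i))%N = (t <= i)%N.
Proof.
case: (leqP t i) => [le_ti | lt_it].
- rewrite (bigD1 i) //= eqxx big1 // => k /andP [_ /negbTE ->] //.
- by rewrite big1 // => k le_tk; case: eqP => // eq_ki; move: lt_it; rewrite -eq_ki ltnNge le_tk.
Qed.

Lemma tail_move x x' (i j : 'I_m.+1) :
  (forall k, x' k + (k == i) = x k + (k == j))%N <->
  (forall t, tail x' t + (t <= i) = tail x t + (t <= j))%N.
Proof.
split => [move_ij t | tail_ij k].
- by rewrite -!tail_indicator -!big_split; exact: eq_bigr.
- have := tail_ij k; have := tail_ij k.+1; rewrite !(tail_rec _ k).
  by rewrite -!val_eqE /=; case: (ltngtP k i); case: (ltngtP k j); lia.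
Qed.

Lemma tail_of_profile (W : nat -> nat) :
  (forall t, t <= m -> W t.+1 <= W t)%N -> W m.+1 = 0%N ->
  forall t, (t <= m.+1)%N -> tail [ffun i : 'I_m.+1 => W i - W i.+1]%N t = W t.
Proof.
move=> W_anti W_end t le_tm.
suff tail_W d : forall u, (u + d = m.+1)%N -> tail [ffun i : 'I_m.+1 => W i - W i.+1]%N u = W u.
  by apply: (tail_W (m.+1 - t)); lia.
elim: d => [|d IH] u eq_u; first by rewrite addn0 in eq_u; rewrite eq_u tail_out.
have lt_um : (u < m.+1)%N by lia.
rewrite (tail_rec _ (Ordinal lt_um)) /= IH ?ffunE /=; last lia.
by have := W_anti u; lia.
Qed.

(* For two vertices of I_m^(n) the tail sums at 0 and beyond m agree, so a
   relation c between tail profiles that is trivial there is determined by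
   the inner values t = m - l, which are the coordinates of phi. *)
Lemma tail_determined n x x' (c : nat -> nat) :
  redpow_vertex n x -> redpow_vertex n x' ->
  c 0 = 0%N -> (forall t, m < t -> c t = 0)%N ->
  (forall l : 'I_m, tail x' (m - l) = tail x (m - l) + c (m - l))%N ->
  forall t, tail x' t = (tail x t + c t)%N.
Proof.
move=> sum_x sum_x' c_0 c_out c_in t.
have [-> | t_gt0] := posnP t; first by rewrite !tail0 sum_x sum_x' c_0 addn0.
have [le_tm | lt_mt] := leqP t m; last by rewrite !tail_out ?c_out.
have lt_l : (m - t < m)%N by lia.
by have := c_in (Ordinal lt_l); rewrite /= subKn.
Qed.

End TailSums.

Definition tail_step m (x x' : {ffun 'I_m.+1 -> nat}) (s : nat) : Prop :=
  forall t, tail x' t = (tail x t + (t == s))%N.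

Lemma redpow_adj_tail m (x x' : {ffun 'I_m.+1 -> nat}) :
  redpow_adj x x' <-> exists s : 'I_m, tail_step x x' s.+1 \/ tail_step x' x s.+1.
Proof.
split => [[i [j [edge /tail_move tail_ij]]] | [s step]].
- case/orP: edge => /eqP edge.
  + have lt_im : (i < m)%N by rewrite -ltnS edge ltn_ord.
    exists (Ordinal lt_im); left => t; have := tail_ij t; rewrite -edge /=.
    by case: (ltngtP t i.+1); lia.
  + have lt_jm : (j < m)%N by rewrite -ltnS edge ltn_ord.
    exists (Ordinal lt_jm); right => t; have := tail_ij t; rewrite -edge /=.
    by case: (ltngtP t j.+1); lia.
- have edge : path_edge (widen_ord (leqnSn m) s) (lift ord0 s).
    by rewrite /path_edge /= /bump /= eqxx.
  case: step => step; [exists (widen_ord (leqnSn m) s), (lift ord0 s) |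
                       exists (lift ord0 s), (widen_ord (leqnSn m) s)].
  all: split; [by rewrite // /path_edge orbC | apply/tail_move => t /=].
  all: by rewrite /bump /= step; case: (ltngtP t s.+1); lia.
Qed.

(* A unit step of the coordinates of phi at k0 is a tail step at m - k0;
   the edge index s and the coordinate k0 are related by k0 = m - 1 - s. *)
Lemma unit_step_tail m n (x x' : {ffun 'I_m.+1 -> nat}) :
  redpow_vertex n x -> redpow_vertex n x' ->
  unit_step (fun k : 'I_m => tail x (m - k)) (fun k => tail x' (m - k)) <->
  exists s : 'I_m, tail_step x x' s.+1.
Proof.
move=> sum_x sum_x'; split => [[k0 step] | [s step]].
- exists (rev_ord k0) => t; rewrite /= subnSK //.
  apply: (tail_determined (c := fun t => (t == m - k0)%N) sum_x sum_x') => [|u lt_mu|l].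
  + by rewrite eq_sym subn_eq0 leqNgt ltn_ord.
  + by apply/eqP; lia.
  + rewrite step -val_eqE /=; congr (_ + _).
    by have := ltn_ord l; have := ltn_ord k0; case: eqP; case: eqP; lia.
- exists (rev_ord s) => l; rewrite step; congr (_ + _).
  by rewrite -val_eqE /=; have := ltn_ord l; have := ltn_ord s; case: eqP; case: eqP; lia.
Qed.

Lemma delta_nonneg m n (y : {ffun 'I_m -> int}) :
  delta_vertex n y -> y = [ffun k => Posz `|y k|%N].
Proof.
move=> y_delta; apply/ffunP => k.
by have [y_ge0 _] := y_delta k k (leqnn k); rewrite ffunE gez0_abs.
Qed.

Lemma delta_natP m n (y : {ffun 'I_m -> int}) :
  delta_vertex n y -> forall i j : 'I_m, (i <= j)%N -> (`|y i| <= `|y j| <= n)%N.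
Proof. by move=> y_delta i j /y_delta; lia. Qed.

Lemma phiE m (x : {ffun 'I_m.+1 -> nat}) : phi x = [ffun k : 'I_m => Posz (tail x (m - k))].
Proof. by []. Qed.

Lemma phi_vertex m n (x : {ffun 'I_m.+1 -> nat}) :
  redpow_vertex n x -> delta_vertex n (phi x).
Proof.
move=> sum_x i j le_ij; rewrite phiE !ffunE.
have := tail_anti x (leq_sub2l m le_ij); have := tail_anti x (leq0n (m - j)).
by rewrite tail0 sum_x; lia.
Qed.

(* phi determines the whole tail profile, hence the vertex. *)
Lemma phi_inj m n (x x' : {ffun 'I_m.+1 -> nat}) :
  redpow_vertex n x -> redpow_vertex n x' -> phi x = phi x' -> x = x'.
Proof.
move=> sum_x sum_x' eq_phi.
have eq_tail := tail_determined (c := fun=> 0%N) sum_x sum_x' erefl (fun=> fun=> erefl).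
have {}eq_tail t : tail x' t = tail x t.
  rewrite eq_tail ?addn0 // => l; have := congr1 (fun y : {ffun 'I_m -> int} => y l) eq_phi.
  by rewrite !phiE !ffunE addn0 => -[].
apply/ffunP => k; apply: (@addIn (tail x k.+1)).
by rewrite -tail_rec -(eq_tail k.+1) -tail_rec eq_tail.
Qed.

(* A point of Delta_{m,n}, read backwards and framed by n and 0, is a
   nonincreasing profile, hence the tail profile of some vertex. *)
Lemma phi_surj m n (y : {ffun 'I_m -> int}) :
  delta_vertex n y -> exists2 x, redpow_vertex n x & phi x = y.
Proof.
case: m y => [|m] y y_delta.
  exists [ffun=> n]; first by rewrite /redpow_vertex big_ord1 ffunE.
  by apply/ffunP => -[].
have y_nat := delta_natP y_delta.
pose W t := if t == 0 then n else if (t <= m.+1)%N then `|y (inord (m.+1 - t))|%N else 0%N.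
have W_anti t : (t <= m.+1)%N -> (W t.+1 <= W t)%N.
  rewrite /W /=; case: (posnP t) => [-> _ | t_gt0 le_tm].
    by have := y_nat (inord m) (inord m); rewrite subn1 /=; lia.
  rewrite le_tm; case: ltnP => // lt_tm.
  by have := y_nat (inord (m.+1 - t.+1)) (inord (m.+1 - t)); rewrite !inordK; lia.
exists [ffun i : 'I_m.+2 => W i - W i.+1]%N.
  by rewrite /redpow_vertex -tail0 (tail_of_profile W_anti) //; rewrite /W /= ?ltnn.
apply/ffunP => k; have lt_km := ltn_ord k.
rewrite (delta_nonneg y_delta) phiE !ffunE (tail_of_profile W_anti) /W ?ltnn //=; last lia.
by rewrite ifF ?leq_subr ?subKn ?inord_val //; [exact: ltnW | apply/eqP; lia].
Qed.

Lemma phi_adj m n (x x' : {ffun 'I_m.+1 -> nat}) :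
  redpow_vertex n x -> redpow_vertex n x' ->
  (redpow_adj x x' <-> lattice_adj (phi x) (phi x')).
Proof.
move=> sum_x sum_x'.
rewrite redpow_adj_tail !phiE lattice_adj_unit_step.
rewrite (unit_step_tail sum_x sum_x') (unit_step_tail sum_x' sum_x).
by split => [[s []] | [] [s]]; [left|right|..]; exists s; [..|left|right].
Qed.

Lemma phi_iso m n :
  is_graph_iso (@redpow_vertex m n) (@redpow_adj m)
               (@delta_vertex m n) (@lattice_adj m) (@phi m).
Proof.
split; [exact: phi_vertex | exact: phi_inj | exact: phi_surj | exact: phi_adj].
Qed.

Section StrictlyIncreasing.
Variable m : nat.
Implicit Types a b : 'I_m -> nat.

Definition strict_incr a : Prop := forall k l : 'I_m, (k < l)%N -> (a k < a l)%N.

Lemma strict_incr_inj a : strict_incr a -> injective a.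
Proof.
move=> a_incr k l eq_kl; apply: val_inj.
by case: (ltngtP k l) => // /a_incr; rewrite eq_kl ltnn.
Qed.

Lemma strict_incr_gap a : strict_incr a ->
  forall k l : 'I_m, (k <= l)%N -> (a k + (l - k) <= a l)%N.
Proof.
move=> a_incr k l le_kl.
suff gap d (j : 'I_m) : (k + d)%N = j -> (a k + d <= a j)%N by apply: gap; rewrite subnKC.
elim: d j => [|d IH] j eq_j; first by rewrite addn0 (_ : j = k) //; apply: val_inj => /=; lia.
have lt_j : (j.-1 < m)%N by have := ltn_ord j; lia.
have := IH (Ordinal lt_j) ltac:(rewrite /=; lia).
by have := a_incr (Ordinal lt_j) j ltac:(rewrite /=; lia); lia.
Qed.

Lemma strict_incr_sorted a : strict_incr a -> sorted ltn (codom a).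
Proof.
move=> a_incr; rewrite codomE sorted_map.
apply: (@sub_sorted _ (relpre val ltn)) => [k l /a_incr //|].
by rewrite -sorted_map val_enum_ord iota_ltn_sorted.
Qed.

Lemma strict_incr_codom a b : strict_incr a -> strict_incr b ->
  codom a =i codom b -> a =1 b.
Proof.
move=> a_incr b_incr eq_ab k.
have eq_seq : codom a = codom b.
  by apply: (irr_sorted_eq ltn_trans ltnn); rewrite ?strict_incr_sorted.
have := congr1 (nth 0%N ^~ k) eq_seq.
by rewrite !codomE !(nth_map k) -?enumT ?size_enum_ord // nth_ord_enum.
Qed.

Definition replace_at a (k0 : 'I_m) (v : nat) (k : 'I_m) : nat :=
  if k == k0 then v else a k.

Lemma mem_codom_replace a k0 v t : injective a ->
  (t \in codom (replace_at a k0 v)) = (t == v) || ((t != a k0) && (t \in codom a)).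
Proof.
move=> a_inj; apply/codomP/idP => [[k ->] | ].
  rewrite /replace_at; case: (eqVneq k k0) => [_ | k_k0]; first by rewrite eqxx.
  by rewrite (inj_eq a_inj) k_k0 codom_f orbT.
case/orP => [/eqP -> | /andP [t_k0 /codomP [k eq_t]]]; first by exists k0; rewrite /replace_at eqxx.
by exists k; rewrite /replace_at; case: eqVneq => // eq_k; move: t_k0; rewrite eq_t eq_k eqxx.
Qed.

(* If the value sets of two strictly increasing sequences differ by moving
   one element p to a neighbouring place q, the sequences differ by a unit
   step at the position of p: replacing p by q keeps a increasing, and the
   result enumerates the same set as b. *)
Lemma swap_adjacent a b (p q : nat) : strict_incr a -> strict_incr b ->
  (p.+1 == q) || (q.+1 == p) ->
  p \in codom a -> p \notin codom b -> q \in codom b -> q \notin codom a ->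
  (forall t, t != p -> t != q -> (t \in codom a) = (t \in codom b)) ->
  unit_step a b \/ unit_step b a.
Proof.
move=> a_incr b_incr /orP pq p_a p_b q_b q_a agree.
have [k0 p_def] := codomP p_a.
have a_ne_q j : a j != q by apply: contraNneq q_a => <-; apply: codom_f.
have c_incr : strict_incr (replace_at a k0 q).
  move=> k l lt_kl; have := a_incr k l lt_kl; have := a_ne_q k; have := a_ne_q l.
  by rewrite /replace_at; case: (eqVneq k k0) => [-> | _]; case: (eqVneq l k0) => [-> | _]; lia.
have c_codom : codom (replace_at a k0 q) =i codom b.
  move=> t; rewrite mem_codom_replace; last exact: strict_incr_inj.
  rewrite -p_def.
  case: (eqVneq t q) => [-> | t_q] /=; first by rewrite q_b.
  case: (eqVneq t p) => [-> | t_p] /=; first by rewrite (negbTE p_b).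
  exact: agree.
have b_def := strict_incr_codom c_incr b_incr c_codom.
case: pq => /eqP pq; [left | right]; exists k0 => l; rewrite -b_def /replace_at.
all: by case: eqVneq => [-> | _]; rewrite ?addn0; lia.
Qed.

End StrictlyIncreasing.

Section SymmetricDifference.
Variables (T : finType) (u v : T).
Implicit Types A B : {set T}.

Lemma symdiff_agree A B : A :\: B :|: B :\: A = [set u; v] ->
  forall w, w != u -> w != v -> (w \in A) = (w \in B).
Proof.
move=> sd w w_u w_v; have : w \notin [set u; v] by rewrite !inE negb_or w_u w_v.
by rewrite -sd !inE; case: (w \in A); case: (w \in B).
Qed.

Lemma symdiff_split A B : #|A| = #|B| -> u != v -> A :\: B :|: B :\: A = [set u; v] ->
  (u \in A :\: B /\ v \in B :\: A) \/ (v \in A :\: B /\ u \in B :\: A).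
Proof.
have one_side (X Y : {set T}) : #|X| = #|Y| -> X :\: Y :|: Y :\: X = [set u; v] ->
    u \in X :\: Y -> v \notin X :\: Y.
  move=> card_XY sd u_XY; apply/negP => v_XY.
  have sub_YX : Y \subset X.
    apply/subsetP => w w_Y; apply/negPn/negP => w_X.
    have : w \in [set u; v] by rewrite -sd !inE w_Y w_X orbT.
    by rewrite !inE => /orP [] /eqP eq_w; [move: u_XY | move: v_XY]; rewrite -eq_w !inE w_Y.
  have : Y \proper X by apply/properP; split => //; exists u; move: u_XY; rewrite inE => /andP [].
  by move/proper_card; rewrite card_XY ltnn.
move=> card_AB u_v sd.
have : u \in A :\: B :|: B :\: A by rewrite sd !inE eqxx.
have : v \in A :\: B :|: B :\: A by rewrite sd !inE eqxx orbT.
rewrite !in_setU => /orP [] v_in /orP [] u_in; [ | by right | by left | ].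
- by move: (one_side A B card_AB sd u_in); rewrite v_in.
- by move: (one_side B A (esym card_AB) ltac:(by rewrite setUC) u_in); rewrite v_in.
Qed.

End SymmetricDifference.

Lemma sorted_val_enum N (A : {set 'I_N}) : sorted ltn [seq val w | w <- enum A].
Proof.
rewrite /enum_mem -enumT sorted_map sorted_filter //; first by move=> j i k; apply: ltn_trans.
by rewrite -(sorted_map (f := val)) val_enum_ord iota_ltn_sorted.
Qed.

Section Tokens.
Variables (m n : nat).
Local Notation N := (n + m - 1)%N.
Implicit Types y z : {ffun 'I_m -> int}.

Definition tok y (k : 'I_m) : nat := (`|y k| + k)%N.

(* The isomorphism Delta_{m,n} -> F_m(I_{n+m-1}); positions are at most
   n + m - 1 for points of Delta_{m,n}, so inord does not truncate them. *)
Definition psi y : {set 'I_N.+1} := [set inord (tok y k) | k : 'I_m].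

Lemma tok_incr y : delta_vertex n y -> strict_incr (tok y).
Proof. by move=> y_delta k l lt_kl; have := delta_natP y_delta (ltnW lt_kl); rewrite /tok; lia. Qed.

Lemma tok_bound y k : delta_vertex n y -> (tok y k < N.+1)%N.
Proof.
by move=> y_delta; have := delta_natP y_delta (leqnn k); have := ltn_ord k; rewrite /tok; lia.
Qed.

Lemma mem_codom_tok y t : delta_vertex n y ->
  (t \in codom (tok y)) = (t < N.+1)%N && (inord t \in psi y).
Proof.
move=> y_delta; apply/codomP/andP => [[k ->] | [lt_tN /imsetP [k _ eq_t]]].
  by rewrite tok_bound //; split=> //; apply: imset_f.
by exists k; rewrite -(inordK lt_tN) eq_t inordK ?tok_bound.
Qed.

Lemma mem_psi y w : delta_vertex n y -> (w \in psi y) = (val w \in codom (tok y)).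
Proof. by move=> y_delta; rewrite mem_codom_tok // ltn_ord inord_val. Qed.

Lemma psi_vertex y : delta_vertex n y -> token_vertex m (psi y).
Proof.
move=> y_delta; rewrite /token_vertex card_imset ?card_ord // => k l /(congr1 val).
by rewrite /= !inordK ?tok_bound // => /(strict_incr_inj (tok_incr y_delta)).
Qed.

(* psi y determines its increasing enumeration tok y, hence y. *)
Lemma psi_inj y z : delta_vertex n y -> delta_vertex n z -> psi y = psi z -> y = z.
Proof.
move=> y_delta z_delta eq_psi.
have eq_tok : tok y =1 tok z.
  apply: strict_incr_codom; [exact: tok_incr | exact: tok_incr | move=> t].
  by rewrite !mem_codom_tok // eq_psi.
apply/ffunP => k; rewrite (delta_nonneg y_delta) (delta_nonneg z_delta) !ffunE.
by have := eq_tok k; rewrite /tok => /addIn ->.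
Qed.

(* Every m-set is psi y, where y_k is the k-th smallest element minus k. *)
Lemma psi_surj A : token_vertex m A -> exists2 y, delta_vertex n y & psi y = A.
Proof.
move=> card_A; pose s := [seq val w | w <- enum A].
have size_s : size s = m by rewrite size_map -cardE.
pose a (k : 'I_m) := nth 0%N s k.
have a_incr : strict_incr a.
  by move=> k l; apply: (sorted_ltn_nth ltn_trans 0%N (sorted_val_enum A)); rewrite inE size_s.
have codom_a : codom a = s.
  rewrite codomE -[map _ _]/(map (nth 0%N s \o val) _) map_comp val_enum_ord -size_s.
  exact: mkseq_nth.
have a_bound k : (a k < N.+1)%N.
  have /mapP [w _ ->] : a k \in s by rewrite -codom_a codom_f.
  exact: ltn_ord.
have a_ge (k : 'I_m) : (k <= a k)%N.
  have lt_0m : (0 < m)%N by apply: leq_ltn_trans (ltn_ord k).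
  by have := strict_incr_gap a_incr (k := Ordinal lt_0m) (leq0n k); rewrite /=; lia.
have a_top (k : 'I_m) : (a k + (m.-1 - k) <= N)%N.
  have lt_top : (m.-1 < m)%N by have := ltn_ord k; lia.
  have le_k_top : (k <= Ordinal lt_top)%N by rewrite /=; have := ltn_ord k; lia.
  have := strict_incr_gap a_incr le_k_top.
  by have := a_bound (Ordinal lt_top); have := ltn_ord k; rewrite /=; lia.
pose y := [ffun k => Posz (a k - k)].
have y_delta : delta_vertex n y.
  move=> i j le_ij; rewrite !ffunE; have := strict_incr_gap a_incr le_ij.
  by have := a_top j; have := a_ge i; have := a_ge j; have := ltn_ord j; lia.
have tok_y : tok y =1 a by move=> k; rewrite /tok ffunE absz_nat subnK.
exists y => //; apply/setP => w.
by rewrite (mem_psi _ y_delta) (eq_codom tok_y) codom_a (mem_map val_inj) mem_enum.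
Qed.

Lemma tok_unit_step y z :
  unit_step (fun k => `|y k|%N) (fun k => `|z k|%N) <-> unit_step (tok y) (tok z).
Proof. by rewrite /tok; split=> -[k0 step]; exists k0 => l; move: (step l); lia. Qed.

(* Raising the k0-th token position by one moves that token to the free
   neighbouring place: the symmetric difference is an edge of I_{n+m-1}. *)
Lemma psi_step y z : delta_vertex n y -> delta_vertex n z ->
  unit_step (tok y) (tok z) -> token_adj (psi y) (psi z).
Proof.
move=> y_delta z_delta [k0 step]; set a := tok y.
have z_def : tok z =1 replace_at a k0 (a k0).+1.
  by move=> k; rewrite step /replace_at; case: (eqVneq k k0) => [-> | _]; rewrite ?addn0 ?addn1.
have next_out : (a k0).+1 \notin codom a.
  apply/codomP => -[l eq_l]; have l_k0 : l != k0 by apply: contra_eqN eq_l => /eqP ->; lia.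
  have : tok z l = tok z k0 by rewrite !step (negbTE l_k0) eqxx addn0 addn1 -/a eq_l.
  by move/(strict_incr_inj (tok_incr z_delta))/eqP; rewrite (negbTE l_k0).
have next_bound : ((a k0).+1 < N.+1)%N by have := tok_bound k0 z_delta; rewrite step eqxx addn1.
have a_bound : (a k0 < N.+1)%N by apply: ltnW.
exists (inord (a k0)), (inord (a k0).+1); split.
  by rewrite /path_edge !inordK ?eqxx.
apply/setP => -[t lt_t]; rewrite !inE !mem_psi // (eq_codom z_def).
rewrite mem_codom_replace; last exact: (strict_incr_inj (tok_incr y_delta)).
rewrite -!val_eqE /= !inordK //.
case: (eqVneq t (a k0)) => [-> | t_a]; first by rewrite codom_f (ltn_eqF (ltnSn _)).
case: (eqVneq t (a k0).+1) => [-> | t_a1] /=; first by rewrite (negbTE next_out).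
by case: (t \in codom a).
Qed.

Lemma psi_adj_step y z : delta_vertex n y -> delta_vertex n z ->
  token_adj (psi y) (psi z) -> unit_step (tok y) (tok z) \/ unit_step (tok z) (tok y).
Proof.
move=> y_delta z_delta [u [v [edge sd]]].
have u_v : u != v by apply: contraTneq edge => ->; rewrite /path_edge orbb eqn_leq ltnn.
have card_yz : #|psi y| = #|psi z| by rewrite (psi_vertex y_delta) (psi_vertex z_delta).
have agree t : t != val u -> t != val v -> (t \in codom (tok y)) = (t \in codom (tok z)).
  move=> t_u t_v; rewrite !mem_codom_tok //; case: ltnP => //= lt_tN.
  by apply: (symdiff_agree sd); rewrite -val_eqE /= inordK.
have [y_incr z_incr] := (tok_incr y_delta, tok_incr z_delta).
case: (symdiff_split card_yz u_v sd) => -[];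
  rewrite !inE !mem_psi // => /andP [p_z p_y] /andP [q_y q_z].
- exact: (swap_adjacent y_incr z_incr edge).
- apply: (swap_adjacent y_incr z_incr _ p_y p_z q_z q_y); first by rewrite orbC.
  by move=> t t_v t_u; apply: agree.
Qed.

End Tokens.

Lemma token_adj_sym N (A B : {set 'I_N.+1}) : token_adj A B -> token_adj B A.
Proof. by move=> [u [v [edge sd]]]; exists u, v; rewrite setUC. Qed.

Lemma psi_adj m n (y z : {ffun 'I_m -> int}) : delta_vertex n y -> delta_vertex n z ->
  (lattice_adj y z <-> token_adj (psi n y) (psi n z)).
Proof.
move=> y_delta z_delta.
rewrite {1}(delta_nonneg y_delta) {1}(delta_nonneg z_delta) lattice_adj_unit_step.
rewrite !tok_unit_step; split => [[step | step] | adj].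
- exact: psi_step.
- by apply: token_adj_sym; apply: psi_step.
- exact: (psi_adj_step y_delta z_delta adj).
Qed.

Lemma psi_iso m n :
  is_graph_iso (@delta_vertex m n) (@lattice_adj m)
    (@token_vertex m (n + m - 1)) (@token_adj (n + m - 1)) (psi n).
Proof.
split; [exact: psi_vertex | exact: psi_inj | exact: psi_surj | exact: psi_adj].
Qed.

Theorem mainTheorem9 (m n : nat) (hm : (1 <= m)%N) (hn : (1 <= n)%N) :
  is_graph_iso (@redpow_vertex m n) (@redpow_adj m)
               (@delta_vertex m n) (@lattice_adj m) (@phi m)
  /\ graphs_isomorphic (@redpow_vertex m n) (@redpow_adj m)
                       (@token_vertex m (n + m - 1)) (@token_adj (n + m - 1)).
Proof.
split; first exact: phi_iso.
by exists (fun x => psi n (phi x)); apply: iso_comp (phi_iso m n) (psi_iso m n).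
Qed.
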